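(* Let $G$ be a positively $0$-transitive Lie superalgebra such that $G_+$ is generated by $G_1$; let $U$ be the universal Lie superalgebra associated to $U_1:=G_1$, let $D_{2+}\subseteq U_{2+}$ be the kernel of the canonical surjective morphism $U_+\to G_+$ restricting to the identity on $U_1$ (so $G_+\cong U_+/D_{2+}$), and let $\rho:G_{1-}\to U_{1-}$ be the map defined by $\rho(u)=u$ for $u\in G_1$ and $\rho(x)(u)=\rho([x,u])$ for $x\in G_{0-}$, $u\in U_1$. Set $T_1=U_1$, fix $p\ge 0$, and let $T_0,\ldots,T_{-p}$ be subspaces of $U_0,\ldots,U_{-p}$ such that for $0\le k\le p$: $\rho(G_{-k})\subseteq T_{-k}\subseteq\mathrm{Hom}(U_1,T_{-k+1})$ and $[T_{-k},D_{2+}]\subseteq D_{2+}$. Then $G$ embeds (via an injective Lie superalgebra morphism) into the reduced prolongation $N'/D_{2+}$ of $G_+$ with respect to $T_{-p}\oplus\cdots\oplus T_{-1}\oplus T_0$.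
   Context: All vector spaces are over $\mathbb{K}=\mathbb{R}$ or $\mathbb{C}$, $\mathbb{Z}$-graded, parity equal to degree mod 2. A Lie superalgebra is a graded space with degree-preserving bracket satisfying graded antisymmetry and graded Jacobi. $G_\pm=\bigoplus_{k\ge1}G_{\pm k}$, $G_{p-}=\bigoplus_{k\le p}G_k$, $U_{2+}=\bigoplus_{k\ge2}U_k$. $G$ is positively $0$-transitive if for $x\in G_{0-}$, $[G_+,x]=0$ implies $x=0$. Universal Lie superalgebra: for $U_1$ concentrated in degree 1 (odd), put $U_0=\mathrm{End}(U_1)$, $U_{-p+1}=\mathrm{Hom}(U_1,U_{-p+2})$ for $p\ge2$; on $U_{1-}$ define brackets recursively by $[x,u]=x(u)$, $[u,x]=-(-1)^{|x|}x(u)$, $[x,y](u)=[x,y(u)]+(-1)^{|y|}[x(u),y]$ ($x,y\in U_{0-}$, $u\in U_1$); $U$ is the unique Lie superalgebra extending this semilocal Lie superalgebra with $U_+$ free on $U_1$. Reduced prolongation: with $N=\{x\in U:[x,d]\in D_{2+}\ \forall d\in D_{2+}\}$ the idealiser of $D_{2+}$, put $N'_{-p}=T_{-p}$, $N'_{-k}=\mathrm{Hom}(U_1,N'_{-k+1})\cap N_{-k}$ for $k\ge p+1$, and $N'=\bigoplus_{k\ge p+1}N'_{-k}\oplus T_{-p}\oplus\cdots\oplus T_0\oplus U_+$ (a subalgebra of $N$ containing $D_{2+}$ as an ideal); the reduced prolongation is $N'/D_{2+}$. *)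

(* Graded Lie superalgebras over a numeric field K
   (covers K = R and K = C), modelled inside a K-vector space V
   by a family of homogeneous-component predicates and a bracket. *)
From HB Require Import structures.
From mathcomp Require Import all_boot all_order all_algebra.
Set Implicit Arguments. Unset Strict Implicit. Unset Printing Implicit Defensive.
Import Order.TTheory GRing.Theory Num.Theory.
Local Open Scope ring_scope.

Section Defs.
Variable K : numFieldType.

Definition subspace (V : lmodType K) (P : V -> Prop) : Prop :=
  P 0 /\ forall (a : K) x y, P x -> P y -> P (a *: x + y).

Definition lin_on (V W : lmodType K) (P : V -> Prop) (f : V -> W) : Prop :=
  forall (a : K) x y, P x -> P y -> f (a *: x + y) = a *: f x + f y.

(* v lies in the sum of the homogeneous components hom k with Q k
   (e.g. Q k = (k <= p) gives V_{p-}, Q k = (0 < k) gives V_+). *)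
Definition span_of (V : lmodType K) (Q : int -> bool) (hom : int -> V -> Prop)
  (v : V) : Prop :=
  exists (s : seq int) (f : int -> V),
    (forall k, k \in s -> Q k /\ hom k (f k)) /\ v = \sum_(k <- s) f k.

Definition pos (k : int) : bool := 0 < k.

Definition graded (V : lmodType K) (hom : int -> V -> Prop) : Prop :=
  (forall k, subspace (hom k)) /\
  (forall v, span_of predT hom v) /\
  (forall (s : seq int) (f : int -> V), uniq s ->
     (forall k, k \in s -> hom k (f k)) -> \sum_(k <- s) f k = 0 ->
     forall k, k \in s -> f k = 0).

(* graded Lie superalgebra, parity = degree mod 2 *)
Definition is_lie_super (V : lmodType K) (hom : int -> V -> Prop)
  (br : V -> V -> V) : Prop :=
  graded hom /\
  (forall (a : K) x y z, br (a *: x + y) z = a *: br x z + br y z) /\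
  (forall (a : K) x y z, br z (a *: x + y) = a *: br z x + br z y) /\
  (forall (a b : int) x y, hom a x -> hom b y -> hom (a + b) (br x y)) /\
  (forall (a b : int) x y, hom a x -> hom b y ->
     br x y = - ((-1 : K) ^ (a * b) *: br y x)) /\
  (forall (a b : int) x y z, hom a x -> hom b y ->
     br x (br y z) = br (br x y) z + (-1 : K) ^ (a * b) *: br y (br x z)).

Definition gen_sub (V : lmodType K) (br : V -> V -> V) (S : V -> Prop) (v : V)
  : Prop :=
  forall P : V -> Prop, subspace P -> (forall x, S x -> P x) ->
    (forall x y, P x -> P y -> P (br x y)) -> P v.

Definition pos_zero_trans (V : lmodType K) (hom : int -> V -> Prop)
  (br : V -> V -> V) : Prop :=
  forall x, span_of (fun k => k <= 0) hom x ->
    (forall y, span_of pos hom y -> br y x = 0) -> x = 0.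

Definition lie_mor_pos (V W : lmodType K) (hom : int -> V -> Prop)
  (br : V -> V -> V) (homW : int -> W -> Prop) (brW : W -> W -> W)
  (phi : V -> W) : Prop :=
  lin_on (span_of pos hom) phi /\
  (forall k v, 0 < k -> hom k v -> homW k (phi v)) /\
  (forall x y, span_of pos hom x -> span_of pos hom y ->
     phi (br x y) = brW (phi x) (phi y)).

Definition free_pos (V : lmodType K) (hom : int -> V -> Prop)
  (br : V -> V -> V) : Prop :=
  forall (W : lmodType K) (homW : int -> W -> Prop) (brW : W -> W -> W),
    is_lie_super homW brW ->
    forall f : V -> W, lin_on (hom 1) f ->
      (forall u, hom 1 u -> homW 1 (f u)) ->
      exists phi : V -> W,
        (lie_mor_pos hom br homW brW phi /\ forall u, hom 1 u -> phi u = f u) /\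
        forall psi : V -> W,
          lie_mor_pos hom br homW brW psi -> (forall u, hom 1 u -> psi u = f u) ->
          forall v, span_of pos hom v -> psi v = phi v.

(* U_0 = End(U_1), U_{-k} = Hom(U_1, U_{-k+1}) via x |-> [x, .] *)
Definition universal_neg (V : lmodType K) (hom : int -> V -> Prop)
  (br : V -> V -> V) : Prop :=
  forall k : nat,
    (forall x, hom (- k%:Z) x -> (forall u, hom 1 u -> br x u = 0) -> x = 0) /\
    (forall f : V -> V, lin_on (hom 1) f ->
       (forall u, hom 1 u -> hom (1 - k%:Z) (f u)) ->
       exists x, hom (- k%:Z) x /\ forall u, hom 1 u -> br x u = f u).

Definition inD (V W : lmodType K) (hom : int -> V -> Prop) (pi : V -> W) (d : V)
  : Prop := span_of pos hom d /\ pi d = 0.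

Definition inN (V W : lmodType K) (hom : int -> V -> Prop) (br : V -> V -> V)
  (pi : V -> W) (x : V) : Prop :=
  forall d, inD hom pi d -> inD hom pi (br x d).

(* Nprime_neg j = N'_{-(p+j)} ; T k stands for T_{-k} *)
Fixpoint Nprime_neg (V W : lmodType K) (hom : int -> V -> Prop)
  (br : V -> V -> V) (pi : V -> W) (p : nat) (T : nat -> V -> Prop) (j : nat)
  : V -> Prop :=
  match j with
  | 0 => T p
  | j'.+1 => fun x => hom (- (p + j)%:Z) x /\ inN hom br pi x /\
              forall u, hom 1 u -> Nprime_neg hom br pi p T j' (br x u)
  end.

(* N' = (+)_{k>=p+1} N'_{-k} (+) T_{-p} (+) ... (+) T_0 (+) U_+ *)
Definition inNprime (V W : lmodType K) (hom : int -> V -> Prop)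
  (br : V -> V -> V) (pi : V -> W) (p : nat) (T : nat -> V -> Prop) (v : V)
  : Prop :=
  exists s : seq V,
    (forall w, w \in s ->
       (exists j, Nprime_neg hom br pi p T j w) \/
       (exists k, (k <= p)%N /\ T k w) \/
       (exists m : int, 0 < m /\ hom m w)) /\
    v = \sum_(w <- s) w.

(* injective graded Lie superalgebra morphism G -> N'/D_{2+}, given by
   representatives in N' (maps into the quotient = maps up to D_{2+}) *)
Definition embeds_in_reduced_prolongation (VG VU : lmodType K)
  (homG : int -> VG -> Prop) (brG : VG -> VG -> VG)
  (homU : int -> VU -> Prop) (brU : VU -> VU -> VU) (pi : VU -> VG)
  (p : nat) (T : nat -> VU -> Prop) : Prop :=
  exists phi : VG -> VU,
    (forall x, inNprime homU brU pi p T (phi x)) /\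
    (forall (a : K) x y, inD homU pi (phi (a *: x + y) - (a *: phi x + phi y))) /\
    (forall x y, inD homU pi (phi (brG x y) - brU (phi x) (phi y))) /\
    (forall k x, homG k x -> exists d, inD homU pi d /\ homU k (phi x - d)) /\
    (forall x, inD homU pi (phi x) -> x = 0).

End Defs.

(* The embedding sends a homogeneous [y] of degree [k] to [rho y] if [k <= 0]
   and to some preimage of [y] under [pi] if [k > 0].  It is a morphism modulo
   [D_{2+}] by an intertwining identity: for [x] in [G_d], [d <= 0], and [u] in
   [U_m], the bracket [[rho x, u]] equals [rho [x, pi u]] if [d + m <= 0] and is
   a preimage of [[x, pi u]] otherwise.  It is proved by induction on [u], as
   freeness forces [U_+] to be generated by [U_1].  The same identity shows
   that [rho x] idealises [D_{2+}], which places [rho (G_{-k})] in [N'_{-k}].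
   Injectivity comes from positive 0-transitivity, which makes [rho]
   injective. *)

From HB Require Import structures.
From mathcomp Require Import all_boot all_order all_algebra.
From mathcomp Require Import boolp zify.
From Stdlib Require Import ClassicalEpsilon.
Set Implicit Arguments. Unset Strict Implicit. Unset Printing Implicit Defensive.
Import Order.TTheory GRing.Theory Num.Theory.
Local Open Scope ring_scope.

Section BigUniq.
Variables (I : eqType) (V : zmodType).

Lemma big_uniq_filter (r t : seq I) (F : I -> V) :
  uniq r -> uniq t -> {subset r <= t} -> \sum_(k <- t | k \in r) F k = \sum_(k <- r) F k.
Proof.
move=> ur ut srt; rewrite -big_filter; apply/perm_big/uniq_perm; rewrite ?filter_uniq //.
by move=> k; rewrite mem_filter andb_idr // => /srt.
Qed.

Lemma big_uniq_widen (r t : seq I) (F : I -> V) :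
  uniq r -> uniq t -> {subset r <= t} -> (forall k, k \notin r -> F k = 0) ->
  \sum_(k <- t) F k = \sum_(k <- r) F k.
Proof.
move=> ur ut srt Fr0; rewrite (bigID (mem r)) /= [X in _ + X]big1 ?addr0 //.
exact: big_uniq_filter.
Qed.

Lemma big_uniq_pick (r : seq I) (m : I) (F : I -> V) : uniq r ->
  \sum_(j <- r) (if m == j then F j else 0) = if m \in r then F m else 0.
Proof.
move=> ur; case: ifP => mr; last first.
  by apply: big1_seq => j /andP[_ jr]; case: eqP => // mj; rewrite mj jr in mr.
rewrite (@big_uniq_widen [:: m]) ?big_seq1 ?eqxx //.
- by move=> k; rewrite inE => /eqP->.
- by move=> k; rewrite inE eq_sym => /negbTE->.
Qed.

End BigUniq.

Section Graded.
Variables (K : numFieldType) (V : lmodType K) (hom : int -> V -> Prop).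
Hypothesis grV : graded hom.

Lemma hom0 k : hom k 0. Proof. by case: (grV.1 k). Qed.
Lemma hom_comb k (a : K) x y : hom k x -> hom k y -> hom k (a *: x + y).
Proof. by case: (grV.1 k) => _; apply. Qed.
Lemma homZ k (a : K) x : hom k x -> hom k (a *: x).
Proof. by move=> hx; have := hom_comb a hx (hom0 k); rewrite addr0. Qed.
Lemma homB k x y : hom k x -> hom k y -> hom k (x - y).
Proof. by move=> hx hy; rewrite -scaleN1r addrC; apply: hom_comb. Qed.

Definition decomposes v (r : seq int) (g : int -> V) :=
  [/\ uniq r, forall j, hom j (g j), forall j, j \notin r -> g j = 0
    & v = \sum_(j <- r) g j].

Lemma decomposes_comb (a : K) v w r g r' g' :
  decomposes v r g -> decomposes w r' g' ->
  decomposes (a *: v + w) (undup (r ++ r')) (fun j => a *: g j + g' j).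
Proof.
move=> [ur hg zg ->] [ur' hg' zg' ->]; split.
- exact: undup_uniq.
- by move=> j; apply: hom_comb.
- move=> j; rewrite mem_undup mem_cat negb_or => /andP[jr jr'].
  by rewrite zg // zg' // scaler0 addr0.
have rt : {subset r <= undup (r ++ r')} by move=> k kr; rewrite mem_undup mem_cat kr.
have r't : {subset r' <= undup (r ++ r')} by move=> k kr; rewrite mem_undup mem_cat kr orbT.
rewrite big_split /= -scaler_sumr.
by rewrite (big_uniq_widen ur (undup_uniq _) rt zg) (big_uniq_widen ur' (undup_uniq _) r't zg').
Qed.

Lemma decomposes_homog k x : hom k x ->
  decomposes x [:: k] (fun j => if j == k then x else 0).
Proof.
move=> hx; split => //.
- by move=> j; case: eqP => [->|_]; [exact: hx | exact: hom0].
- by move=> j; rewrite inE => /negbTE->.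
by rewrite big_seq1 eqxx.
Qed.

Lemma decomposes_exists v : exists rg : seq int * (int -> V), decomposes v rg.1 rg.2.
Proof.
have [s [f [Hf ->]]] := grV.2.1 v.
elim: s Hf => [|i s IH] Hf.
  by exists ([::], fun _ => 0); split => //; [exact: hom0 | rewrite !big_nil].
have [[r g] /= Hr] := IH (fun k ks => Hf k (mem_behead (s := i :: s) ks)).
have hi : hom i (f i) by case: (Hf i (mem_head _ _)).
have := decomposes_comb 1 (decomposes_homog hi) Hr.
by rewrite scale1r big_cons => H; eexists (_, _); exact: H.
Qed.

Lemma decomposes_uniq v r g r' g' : decomposes v r g -> decomposes v r' g' -> g =1 g'.
Proof.
move=> [ur hg zg ev] [ur' hg' zg' ev'] j.
set t := undup (r ++ r').
have rt : {subset r <= t} by move=> k kr; rewrite mem_undup mem_cat kr.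
have r't : {subset r' <= t} by move=> k kr; rewrite mem_undup mem_cat kr orbT.
case jt: (j \in t); last first.
  move: jt; rewrite mem_undup mem_cat => /negbT; rewrite negb_or => /andP[jr jr'].
  by rewrite zg // zg'.
apply/eqP; rewrite -subr_eq0; apply/eqP.
apply: (grV.2.2 t (fun j => g j - g' j)) jt; first exact: undup_uniq.
  by move=> k _; apply: homB.
rewrite sumrB (big_uniq_widen ur (undup_uniq _) rt zg).
by rewrite (big_uniq_widen ur' (undup_uniq _) r't zg') -ev -ev' subrr.
Qed.

Definition decomp v : seq int * (int -> V) :=
  proj1_sig (constructive_indefinite_description _ (decomposes_exists v)).
Definition gsupp v := (decomp v).1.
Definition gcomp k v := (decomp v).2 k.

Lemma decomposes_gcomp v : decomposes v (gsupp v) (gcomp^~ v).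
Proof. exact: proj2_sig (constructive_indefinite_description _ (decomposes_exists v)). Qed.

Lemma gcompE v r g : decomposes v r g -> forall k, gcomp k v = g k.
Proof. by move=> H k; apply: decomposes_uniq (decomposes_gcomp v) H k. Qed.

Lemma gcomp_is_linear k : linear (gcomp k).
Proof. by move=> a v w; apply: gcompE (decomposes_comb a (decomposes_gcomp v) (decomposes_gcomp w)) k. Qed.
HB.instance Definition _ k := GRing.isLinear.Build K V V *:%R (gcomp k) (gcomp_is_linear k).

Lemma gcomp_hom k v : hom k (gcomp k v). Proof. by case: (decomposes_gcomp v). Qed.
Lemma uniq_gsupp v : uniq (gsupp v). Proof. by case: (decomposes_gcomp v). Qed.
Lemma gcomp_notin v k : k \notin gsupp v -> gcomp k v = 0.
Proof. by case: (decomposes_gcomp v) => _ _ H _; apply: H. Qed.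
Lemma gcomp_decomp v : v = \sum_(k <- gsupp v) gcomp k v.
Proof. by case: (decomposes_gcomp v). Qed.

Lemma gcomp_homog k j x : hom j x -> gcomp k x = if k == j then x else 0.
Proof. by move=> hx; apply: gcompE (decomposes_homog hx) k. Qed.
Lemma gcomp_id k x : hom k x -> gcomp k x = x.
Proof. by move=> hx; rewrite (gcomp_homog k hx) eqxx. Qed.

Lemma sum_gcomp v r : uniq r -> (forall k, k \notin r -> gcomp k v = 0) ->
  v = \sum_(k <- r) gcomp k v.
Proof.
move=> ur zr; set t := undup (gsupp v ++ r).
have st : {subset gsupp v <= t} by move=> k ks; rewrite mem_undup mem_cat ks.
have rt : {subset r <= t} by move=> k ks; rewrite mem_undup mem_cat ks orbT.
rewrite [LHS]gcomp_decomp -(big_uniq_widen (uniq_gsupp v) (undup_uniq _) st (@gcomp_notin v)).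
exact: big_uniq_widen (undup_uniq _) rt zr.
Qed.

Lemma span_ofP (Q : int -> bool) v :
  span_of Q hom v <-> (forall k, ~~ Q k -> gcomp k v = 0).
Proof.
split.
  move=> [s [f [Hf ->]]] k nQk; rewrite raddf_sum /= big1_seq // => i /andP[_ si].
  have [Qi hi] := Hf i si; rewrite (gcomp_homog k hi); case: eqP => // ki.
  by rewrite ki Qi in nQk.
move=> H; exists (filter Q (gsupp v)), (gcomp^~ v); split.
  by move=> k; rewrite mem_filter => /andP[Qk _]; split => //; apply: gcomp_hom.
apply: sum_gcomp; first by rewrite filter_uniq // uniq_gsupp.
move=> k; rewrite mem_filter negb_and; case Qk: (Q k) => /= ks; first exact: gcomp_notin.
by apply: H; rewrite Qk.
Qed.

Lemma span_homog (Q : int -> bool) k x : Q k -> hom k x -> span_of Q hom x.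
Proof.
move=> Qk hx; exists [:: k], (fun _ => x); split; last by rewrite big_seq1.
by move=> j; rewrite inE => /eqP->.
Qed.

Lemma span_comb (Q : int -> bool) (a : K) x y :
  span_of Q hom x -> span_of Q hom y -> span_of Q hom (a *: x + y).
Proof.
move=> /span_ofP hx /span_ofP hy; apply/span_ofP => k nQk.
by rewrite linearP /= hx // hy // scaler0 addr0.
Qed.

Lemma span0 (Q : int -> bool) : span_of Q hom 0.
Proof. by apply/span_ofP => k _; rewrite raddf0. Qed.

Lemma span_sum (Q : int -> bool) (J : Type) (s : seq J) (F : J -> V) :
  (forall i, span_of Q hom (F i)) -> span_of Q hom (\sum_(i <- s) F i).
Proof.
move=> H; elim: s => [|i s IH]; first by rewrite big_nil; apply: span0.
by rewrite big_cons -[F i]scale1r; apply: span_comb.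
Qed.

End Graded.

Section LieSuper.
Variables (K : numFieldType) (V : lmodType K) (hom : int -> V -> Prop) (br : V -> V -> V).
Hypothesis L : is_lie_super hom br.

Let grV : graded hom := L.1.

Lemma br_combl (a : K) x y z : br (a *: x + y) z = a *: br x z + br y z.
Proof. by case: L => _ [H _]; apply: H. Qed.
Lemma br_combr (a : K) x y z : br z (a *: x + y) = a *: br z x + br z y.
Proof. by case: L => _ [_ [H _]]; apply: H. Qed.
Lemma brDl x y z : br (x + y) z = br x z + br y z.
Proof. by have := br_combl 1 x y z; rewrite !scale1r. Qed.
Lemma brDr x y z : br z (x + y) = br z x + br z y.
Proof. by have := br_combr 1 x y z; rewrite !scale1r. Qed.
Lemma br0l z : br 0 z = 0.
Proof. by apply: (addrI (br 0 z)); rewrite -brDl !addr0. Qed.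
Lemma br0r z : br z 0 = 0.
Proof. by apply: (addrI (br z 0)); rewrite -brDr !addr0. Qed.
Lemma brBl x y z : br (x - y) z = br x z - br y z.
Proof. by rewrite -scaleN1r addrC br_combl scaleN1r addrC. Qed.
Lemma br_suml (J : Type) (s : seq J) (F : J -> V) z :
  br (\sum_(i <- s) F i) z = \sum_(i <- s) br (F i) z.
Proof. by elim: s => [|i s IH]; rewrite ?big_nil ?br0l // !big_cons brDl IH. Qed.
Lemma br_sumr (J : Type) (s : seq J) (F : J -> V) z :
  br z (\sum_(i <- s) F i) = \sum_(i <- s) br z (F i).
Proof. by elim: s => [|i s IH]; rewrite ?big_nil ?br0r // !big_cons brDr IH. Qed.

Lemma br_hom (a b : int) x y : hom a x -> hom b y -> hom (a + b) (br x y).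
Proof. by case: L => _ [_ [_ [H _]]]; apply: H. Qed.
Lemma br_anti (a b : int) x y : hom a x -> hom b y ->
  br x y = - ((-1 : K) ^ (a * b) *: br y x).
Proof. by case: L => _ [_ [_ [_ [H _]]]]; apply: H. Qed.
Lemma br_jacobi (a b : int) x y z : hom a x -> hom b y ->
  br x (br y z) = br (br x y) z + (-1 : K) ^ (a * b) *: br y (br x z).
Proof. by case: L => _ [_ [_ [_ [_ H]]]]; apply: H. Qed.

Lemma br_hom_eq (a b c : int) x y : a + b = c -> hom a x -> hom b y -> hom c (br x y).
Proof. by move=> <-; apply: br_hom. Qed.

Lemma br_gcomp x y : br x y =
  \sum_(i <- gsupp grV x) \sum_(j <- gsupp grV y) br (gcomp grV i x) (gcomp grV j y).
Proof.
rewrite {1}(gcomp_decomp grV x) {1}(gcomp_decomp grV y) br_suml.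
by apply: eq_bigr => i _; rewrite br_sumr.
Qed.

Lemma span_pos_br x y : span_of pos hom x -> span_of pos hom y -> span_of pos hom (br x y).
Proof.
move=> /(span_ofP grV) zx /(span_ofP grV) zy.
rewrite br_gcomp; apply: (span_sum grV) => i; apply: (span_sum grV) => j.
case: (boolP (pos i)) => pi; last by rewrite zx // br0l; exact: span0.
case: (boolP (pos j)) => pj; last by rewrite zy // br0r; exact: span0.
have pij : pos (i + j) by move: pi pj; rewrite /pos; lia.
exact: span_homog pij (br_hom (gcomp_hom grV i x) (gcomp_hom grV j y)).
Qed.

End LieSuper.

Section SubspaceType.
Variables (K : numFieldType) (V : lmodType K) (P : V -> Prop).

(* The unused argument puts the subspace proof into the type, so that the
   instances below, which depend on it, can be found by unification. *)
Definition subspace_pred of subspace P : pred V := fun v => `[< P v >].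

Variable hP : subspace P.

Lemma subspace_predP v : reflect (P v) (subspace_pred hP v).
Proof. exact: asboolP. Qed.

Lemma subspace_pred_closed : submod_closed (subspace_pred hP).
Proof.
case: hP => P0 Pcomb; split; first exact/subspace_predP.
by move=> a x y /subspace_predP Px /subspace_predP Py; apply/subspace_predP/Pcomb.
Qed.
HB.instance Definition _ :=
  GRing.isSubmodClosed.Build K V (subspace_pred hP) subspace_pred_closed.

Definition subspace_type : Type := {v : V | subspace_pred hP v}.
HB.instance Definition _ := [isSub of subspace_type for @sval V (subspace_pred hP)].
HB.instance Definition _ := [Choice of subspace_type by <:].
HB.instance Definition _ := [SubChoice_isSubLmodule of subspace_type by <:].

Lemma subspace_typeP (w : subspace_type) : P (val w).
Proof. exact/subspace_predP/(valP w). Qed.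

End SubspaceType.

Section FreeInduction.
Variables (K : numFieldType) (V : lmodType K) (hom : int -> V -> Prop) (br : V -> V -> V).
Hypotheses (L : is_lie_super hom br) (freeV : free_pos hom br).

Let grV : graded hom := L.1.

Section SubLie.
Variable P : V -> Prop.
Hypotheses (hP : subspace P) (P_gcomp : forall k v, P v -> P (gcomp grV k v))
  (P_br : forall x y, P x -> P y -> P (br x y)).

Let W := subspace_type hP.
Let homW k (w : W) := hom k (val w).
Let inW v (Pv : P v) : W := Sub v (introT (subspace_predP hP v) Pv).
Let brW (x y : W) : W := inW (P_br (subspace_typeP x) (subspace_typeP y)).

Lemma sub_lie_super : is_lie_super homW brW.
Proof.
split; last split; last split; last split; last split.
- split; last split.
  + move=> k; split; first exact: hom0 grV k.
    by move=> a x y hx hy; exact: (hom_comb grV a hx hy).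
  + move=> w; exists (gsupp grV (val w)), (fun k => inW (P_gcomp k (subspace_typeP w))).
    split; first by move=> k _; split => //; apply: gcomp_hom.
    by apply: val_inj; rewrite raddf_sum; exact: gcomp_decomp.
  + move=> s f us hf s0 k ks; apply: val_inj.
    by apply: (grV.2.2 s (fun k => val (f k))) => //; rewrite -raddf_sum s0.
- by move=> a x y z; apply: val_inj; rewrite /= (br_combl L).
- by move=> a x y z; apply: val_inj; rewrite /= (br_combr L).
- by move=> a b x y hx hy; exact: (br_hom L hx hy).
- by move=> a b x y hx hy; apply: val_inj; rewrite /= (br_anti L hx hy).
- by move=> a b x y z hx hy; apply: val_inj; rewrite /= (br_jacobi L _ hx hy).
Qed.

Hypothesis P_1 : forall u, hom 1 u -> P u.

(* Freeness gives a morphism [phi] into the subalgebra [W] extending the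
   identity of [V_1]; [val \o phi] and the identity are then two morphisms
   [V_+ -> V] agreeing on [V_1], hence equal. *)
Lemma free_pos_sub v : span_of pos hom v -> P v.
Proof.
move=> sv.
pose f u : W := if pselect (hom 1 u) is left h then inW (P_1 h) else 0.
have fE u : hom 1 u -> val (f u) = u by rewrite /f; case: pselect.
have lin_f : lin_on (hom 1) f.
  by move=> a x y hx hy; apply: val_inj; rewrite /= !fE //; apply: hom_comb.
have hom_f u : hom 1 u -> homW 1 (f u) by move=> hu; rewrite /homW fE.
have [phi [[[lin_phi [hom_phi br_phi]] phi1] _]] := freeV sub_lie_super lin_f hom_f.
have [phi0 [_ uniq_phi0]] := freeV L (f := id) (fun _ _ _ _ _ => erefl) (fun _ h => h).
have mor_val_phi : lie_mor_pos hom br hom br (fun v => val (phi v)).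
  split; last split.
  - by move=> a x y hx hy; rewrite lin_phi.
  - by move=> k w k0 hw; apply: hom_phi.
  - by move=> x y hx hy; rewrite br_phi.
have mor_id : lie_mor_pos hom br hom br id by [].
have val_phi : val (phi v) = phi0 v.
  by apply: (uniq_phi0 _ mor_val_phi) => // u hu; rewrite phi1 // fE.
rewrite [v](uniq_phi0 _ mor_id) // -val_phi; exact: subspace_typeP.
Qed.

End SubLie.

Variable Q : int -> V -> Prop.
Hypotheses (Q0 : forall m, 0 < m -> Q m 0) (Q1 : forall u, hom 1 u -> Q 1 u)
  (Q_comb : forall m (c : K) y z, 0 < m -> hom m y -> hom m z -> Q m y -> Q m z ->
     Q m (c *: y + z))
  (Q_br : forall a b y z, 0 < a -> 0 < b -> hom a y -> hom b z -> Q a y -> Q b z ->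
     Q (a + b) (br y z)).

Lemma Q_sum k (J : Type) (s : seq J) (F : J -> V) : 0 < k ->
  (forall i, hom k (F i) /\ Q k (F i)) -> Q k (\sum_(i <- s) F i).
Proof.
move=> k0 HF; suff: hom k (\sum_(i <- s) F i) /\ Q k (\sum_(i <- s) F i) by case.
elim: s => [|i s [hs Qs]]; first by rewrite big_nil; split; [exact: (hom0 grV k) | exact: Q0].
have [hi Qi] := HF i; rewrite big_cons -[F i]scale1r.
by split; [exact: (hom_comb grV 1 hi hs) | exact: (Q_comb 1 k0 hi hs Qi Qs)].
Qed.

Lemma Q_gcomp k j v : 0 < k -> (0 < j -> Q j (gcomp grV j v)) ->
  Q k (gcomp grV k (gcomp grV j v)).
Proof.
move=> k0 Qj; rewrite (gcomp_homog _ _ (gcomp_hom grV j v)).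
by case: eqP => [ek|_]; [rewrite ek in k0 *; exact: Qj | exact: Q0].
Qed.

Lemma free_pos_ind m u : 0 < m -> hom m u -> Q m u.
Proof.
move=> m0 hu.
pose P v := span_of pos hom v /\ forall k, 0 < k -> Q k (gcomp grV k v).
have hP : subspace P.
  split; first by split; [exact: (span0 grV pos) | move=> k k0; rewrite raddf0; apply: Q0].
  move=> a x y [sx Qx] [sy Qy]; split; first exact: (span_comb grV a sx sy).
  move=> k k0; rewrite linearP.
  by apply: Q_comb => //; [apply: gcomp_hom | apply: gcomp_hom | apply: Qx | apply: Qy].
have P_gcomp j v : P v -> P (gcomp grV j v).
  move=> [/(span_ofP grV) sv Qv]; split; last by move=> k k0; apply: Q_gcomp => //; exact: Qv.
  case: (boolP (pos j)) => pj; first exact: span_homog pj (gcomp_hom grV j v).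
  by rewrite sv //; exact: (span0 grV pos).
have P_br x y : P x -> P y -> P (br x y).
  move=> [sx Qx] [sy Qy]; split; first exact: (span_pos_br L sx sy).
  move=> k k0; rewrite (br_gcomp L) raddf_sum /=; apply: Q_sum => // i.
  split; first exact: gcomp_hom.
  rewrite raddf_sum /=; apply: Q_sum => // j; split; first exact: gcomp_hom.
  move: sx sy => /(span_ofP grV) sx /(span_ofP grV) sy.
  case: (boolP (pos i)) => pi; last by rewrite sx // (br0l L) raddf0; apply: Q0.
  case: (boolP (pos j)) => pj; last by rewrite sy // (br0r L) raddf0; apply: Q0.
  rewrite (gcomp_homog _ _ (br_hom L (gcomp_hom grV i x) (gcomp_hom grV j y))).
  case: eqP => [->|_]; last exact: Q0.
  by apply: Q_br => //; [apply: gcomp_hom | apply: gcomp_hom | apply: Qx | apply: Qy].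
have P_1 v : hom 1 v -> P v.
  move=> hv; split; first exact: span_homog hv.
  by move=> k k0; rewrite (gcomp_homog _ _ hv); case: eqP => [->|_]; auto.
have [_ Qu] := free_pos_sub hP P_gcomp P_br P_1 (span_homog m0 hu).
by rewrite -(gcomp_id grV hu); apply: Qu.
Qed.

End FreeInduction.

Section PosMorphism.
Variables (K : numFieldType)
  (V : lmodType K) (hom : int -> V -> Prop) (br : V -> V -> V)
  (W : lmodType K) (homW : int -> W -> Prop) (brW : W -> W -> W) (phi : V -> W).
Hypotheses (L : is_lie_super hom br) (LW : is_lie_super homW brW)
  (mor : lie_mor_pos hom br homW brW phi).

Let grV : graded hom := L.1.
Local Notation spV := (span_of pos hom).
Local Notation D := (inD hom phi).


Lemma pmor_comb (a : K) x y : spV x -> spV y -> phi (a *: x + y) = a *: phi x + phi y.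
Proof. by case: mor => H _; apply: H. Qed.
Lemma pmor_hom k v : 0 < k -> hom k v -> homW k (phi v).
Proof. by case: mor => _ [H _]; apply: H. Qed.
Lemma pmor_br x y : spV x -> spV y -> phi (br x y) = brW (phi x) (phi y).
Proof. by case: mor => _ [_ H]; apply: H. Qed.

Lemma pmor0 : phi 0 = 0.
Proof.
have := pmor_comb 1 (span0 grV pos) (span0 grV pos); rewrite !scale1r addr0 => phi00.
by apply: (addrI (phi 0)); rewrite addr0 -phi00.
Qed.
Lemma pmorD x y : spV x -> spV y -> phi (x + y) = phi x + phi y.
Proof. by move=> sx sy; have := pmor_comb 1 sx sy; rewrite !scale1r. Qed.
Lemma pmorZ (a : K) x : spV x -> phi (a *: x) = a *: phi x.
Proof. by move=> sx; have := pmor_comb a sx (span0 grV pos); rewrite !addr0 pmor0 addr0. Qed.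
Lemma pmorB x y : spV x -> spV y -> phi (x - y) = phi x - phi y.
Proof. by move=> sx sy; rewrite -scaleN1r addrC pmor_comb // scaleN1r addrC. Qed.
Lemma pmor_sum (J : Type) (s : seq J) (F : J -> V) : (forall i, spV (F i)) ->
  phi (\sum_(i <- s) F i) = \sum_(i <- s) phi (F i).
Proof.
move=> sF; elim: s => [|i s IH]; first by rewrite !big_nil pmor0.
by rewrite !big_cons pmorD ?IH //; apply: (span_sum grV).
Qed.

Lemma pmor_gcomp k v : spV v -> 0 < k -> phi (gcomp grV k v) = gcomp LW.1 k (phi v).
Proof.
move=> /(span_ofP grV) sv k0.
have phi_comp j : phi (gcomp grV j v) = if pos j then phi (gcomp grV j v) else 0.
  by case: ifP => // /negbT /sv ->; rewrite pmor0.
have sp_comp j : spV (gcomp grV j v).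
  case: (boolP (pos j)) => [pj | /sv ->]; [exact: span_homog (gcomp_hom _ _ _) | exact: (span0 grV pos)].
rewrite {2}(gcomp_decomp grV v) pmor_sum // raddf_sum /=.
rewrite (eq_bigr (fun j => if k == j then phi (gcomp grV j v) else 0)); last first.
  move=> j _; rewrite phi_comp; case: ifP => pj; last by rewrite raddf0; case: eqP.
  by rewrite (gcomp_homog _ _ (pmor_hom pj (gcomp_hom _ _ _))).
by rewrite big_uniq_pick ?uniq_gsupp //; case: ifP => // /negbT /gcomp_notin ->; rewrite pmor0.
Qed.

Lemma D0 : D 0. Proof. by split; [exact: (span0 grV pos) | exact: pmor0]. Qed.
Lemma D_comb (a : K) x y : D x -> D y -> D (a *: x + y).
Proof.
move=> [sx px] [sy py]; split; first exact: (span_comb grV a sx sy).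
by rewrite pmor_comb // px py scaler0 addr0.
Qed.
Lemma DD x y : D x -> D y -> D (x + y).
Proof. by move=> dx dy; have := D_comb 1 dx dy; rewrite scale1r. Qed.
Lemma D_sum (J : eqType) (s : seq J) (F : J -> V) : (forall i, i \in s -> D (F i)) ->
  D (\sum_(i <- s) F i).
Proof.
elim: s => [|i s IH] DF; first by rewrite big_nil; exact: D0.
rewrite big_cons; apply: DD; first by apply: DF; rewrite mem_head.
by apply: IH => j js; apply: DF; rewrite inE js orbT.
Qed.
Lemma D_homog k v : 0 < k -> hom k v -> phi v = 0 -> D v.
Proof. by move=> k0 hv; split => //; apply: span_homog hv. Qed.

Definition congD x y := D (x - y).

Lemma congD_refl x : congD x x. Proof. by rewrite /congD subrr; exact: D0. Qed.
Lemma congD_sym x y : congD x y -> congD y x.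
Proof. by rewrite /congD => dxy; rewrite -opprB -scaleN1r -[_ *: _]addr0; apply: D_comb dxy D0. Qed.
Lemma congD_trans x y z : congD x y -> congD y z -> congD x z.
Proof. by move=> dxy dyz; have := DD dxy dyz; rewrite addrA subrK. Qed.
Lemma congD_comb (c : K) x y x' y' :
  congD x y -> congD x' y' -> congD (c *: x + x') (c *: y + y').
Proof. by move=> dxy dxy'; have := D_comb c dxy dxy'; rewrite /congD scalerBr addrACA opprD. Qed.
Lemma congD_sum (J : eqType) (s : seq J) (F G : J -> V) :
  (forall i, congD (F i) (G i)) -> congD (\sum_(i <- s) F i) (\sum_(i <- s) G i).
Proof. by move=> FG; rewrite /congD -sumrB; apply: D_sum => i _; apply: FG. Qed.

Lemma congD_widen (r t : seq int) (F : int -> V) : uniq r -> uniq t -> {subset r <= t} ->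
  (forall k, k \notin r -> D (F k)) -> congD (\sum_(k <- t) F k) (\sum_(k <- r) F k).
Proof.
move=> ur ut srt Fr; rewrite /congD (bigID (mem r)) /= big_uniq_filter // addrAC subrr add0r.
by rewrite -big_filter; apply: D_sum => k; rewrite mem_filter => /andP[/Fr].
Qed.

End PosMorphism.

Section Embedding.
Variables (K : numFieldType)
  (VG : lmodType K) (homG : int -> VG -> Prop) (brG : VG -> VG -> VG)
  (VU : lmodType K) (homU : int -> VU -> Prop) (brU : VU -> VU -> VU)
  (iota : VG -> VU) (pi : VU -> VG) (rho : VG -> VU)
  (p : nat) (T : nat -> VU -> Prop).
Hypotheses (LG : is_lie_super homG brG) (transG : pos_zero_trans homG brG)
  (genG : forall v, span_of pos homG v -> gen_sub brG (homG 1) v).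
Hypotheses (LU : is_lie_super homU brU) (univU : universal_neg homU brU)
  (freeU : free_pos homU brU).
Hypotheses (iota_lin : lin_on (homG 1) iota)
  (iota_hom : forall g, homG 1 g -> homU 1 (iota g))
  (iota_inj : forall g g', homG 1 g -> homG 1 g' -> iota g = iota g' -> g = g')
  (iota_surj : forall u, homU 1 u -> exists g, homG 1 g /\ iota g = u).
Hypotheses (pi_mor : lie_mor_pos homU brU homG brG pi)
  (pi_iota : forall g, homG 1 g -> pi (iota g) = g).
Hypotheses (rho_iota : forall g, homG 1 g -> rho g = iota g)
  (rho_nat : forall (k : nat) x, homG (- k%:Z) x ->
     homU (- k%:Z) (rho x) /\
     forall g, homG 1 g -> brU (rho x) (iota g) = rho (brG x g)).
Hypothesis T_rho : forall k x, (k <= p)%N -> homG (- k%:Z) x -> T k (rho x).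

Let grG : graded homG := LG.1.
Let grU : graded homU := LU.1.
Local Notation spU := (span_of pos homU).
Local Notation D := (inD homU pi).
Local Notation congD := (congD homU pi).

Lemma nonpos_natE (d : int) : d <= 0 -> d = - (`|d|%N)%:Z.
Proof. by lia. Qed.

Lemma rho_hom d x : d <= 1 -> homG d x -> homU d (rho x).
Proof.
move=> d1; have [-> hx|d1' hx] := eqVneq d 1; first by rewrite rho_iota //; exact: iota_hom.
have d0 : d <= 0 by lia.
by move: hx; rewrite (nonpos_natE d0) => /rho_nat[].
Qed.

Lemma rho_hom_nonpos d x : d <= 0 -> homG d x -> homU d (rho x).
Proof. by move=> d0; apply: rho_hom; lia. Qed.

Lemma rho_br d x g : d <= 0 -> homG d x -> homG 1 g ->
  brU (rho x) (iota g) = rho (brG x g).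
Proof. by move=> d0; rewrite (nonpos_natE d0) => /rho_nat[_]; apply. Qed.

Lemma univ_inj d x : d <= 0 -> homU d x ->
  (forall g, homG 1 g -> brU x (iota g) = 0) -> x = 0.
Proof.
move=> d0; rewrite (nonpos_natE d0) => hx xg0.
apply: ((univU `|d|%N).1 x hx) => u /iota_surj[g [hg <-]]; exact: xg0.
Qed.

Lemma le1_ind (P : int -> Prop) : P 1 ->
  (forall d, d <= 0 -> P (d + 1) -> P d) -> forall d, d <= 1 -> P d.
Proof.
move=> P1 Pstep d d1; have [n ->] : exists n : nat, d = 1 - n%:Z by exists `|1 - d|%N; lia.
elim: n => [|n IH]; first by rewrite subr0.
by apply: Pstep; [lia | rewrite (_ : _ + 1 = 1 - n%:Z) //; lia].
Qed.

Lemma rho_lin d : d <= 1 -> lin_on (homG d) rho.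
Proof.
move: d; apply: le1_ind => [|d d0 IH] a x y hx hy.
  by rewrite !rho_iota ?iota_lin //; apply: hom_comb.
have d1 : d <= 1 by lia.
have hl := rho_hom d1 (hom_comb grG a hx hy).
have hr := hom_comb grU a (rho_hom d1 hx) (rho_hom d1 hy).
apply/eqP; rewrite -subr_eq0; apply/eqP; apply: (univ_inj d0 (homB grU hl hr)).
move=> g hg; rewrite (brBl LU) (br_combl LU) (rho_br d0 (hom_comb grG a hx hy) hg).
rewrite (rho_br d0 hx hg) (rho_br d0 hy hg) (br_combl LG).
by rewrite IH ?subrr //; [exact: (br_hom LG hx hg) | exact: (br_hom LG hy hg)].
Qed.

Lemma rho0 : rho 0 = 0.
Proof.
have := rho_lin (lexx 1) 1 (hom0 grG 1) (hom0 grG 1).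
by rewrite !scale1r addr0 => rho00; apply: (addrI (rho 0)); rewrite addr0 -rho00.
Qed.

Lemma rhoZ d (a : K) x : d <= 1 -> homG d x -> rho (a *: x) = a *: rho x.
Proof. by move=> d1 hx; have := rho_lin d1 a hx (hom0 grG d); rewrite !addr0 rho0 addr0. Qed.

Lemma rhoD d x y : d <= 1 -> homG d x -> homG d y -> rho (x + y) = rho x + rho y.
Proof. by move=> d1 hx hy; have := rho_lin d1 1 hx hy; rewrite !scale1r. Qed.

Lemma rhoB d x y : d <= 1 -> homG d x -> homG d y -> rho (x - y) = rho x - rho y.
Proof.
move=> d1 hx hy; rewrite -scaleN1r addrC (rho_lin d1) //.
by rewrite -[in RHS]scaleN1r addrC.
Qed.

(* Induction on [1 - (i + j)]: after bracketing with [iota g], the Jacobi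
   identity on both sides trades [b] for [[b, g]] and [a] for [[a, g]]. *)
Lemma rho_br_rho i j a b : i <= 0 -> j <= 1 -> homG i a -> homG j b ->
  brU (rho a) (rho b) = rho (brG a b).
Proof.
have [n] : exists n : nat, 1 - (i + j) <= n%:Z by exists (absz (1 - (i + j))%R); lia.
elim: n i j a b => [|n IH] i j a b le_n i0 j1 ha;
  (case: (eqVneq j 1) => [-> hb | j1' hb]; first by rewrite (rho_iota hb) (rho_br i0)); first lia.
have j0 : j <= 0 by lia.
have hab := br_hom LG ha hb.
have ij0 : i + j <= 0 by lia.
have i1 : i <= 1 by lia.
have ij1 : i + j <= 1 by lia.
have ij01 : i + j + 1 <= 1 by lia.
apply/eqP; rewrite -subr_eq0; apply/eqP; apply: (univ_inj ij0).
  exact (homB grU (br_hom LU (rho_hom i1 ha) (rho_hom j1 hb)) (rho_hom ij1 hab)).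
move=> g hg; rewrite (brBl LU) (rho_br ij0 hab hg).
have jacU := br_jacobi LU (iota g) (rho_hom i1 ha) (rho_hom j1 hb).
have jacG := br_jacobi LG g ha hb.
set s := (-1 : K) ^ (i * j) in jacU jacG.
rewrite -[brU (brU _ _) _](addrK (s *: brU (rho b) (brU (rho a) (iota g)))) -jacU.
rewrite -[brG (brG _ _) _](addrK (s *: brG b (brG a g))) -jacG.
rewrite (rho_br j0 hb hg) (rho_br i0 ha hg).
have hbg := br_hom LG hb hg; have hag := br_hom LG ha hg.
rewrite (IH i (j + 1) _ _ ltac:(lia) i0 ltac:(lia) ha hbg).
rewrite (IH j (i + 1) _ _ ltac:(lia) j0 ltac:(lia) hb hag).
have ha_bg := br_hom_eq LG (ltac:(lia) : i + (j + 1) = i + j + 1) ha hbg.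
have hb_ag := br_hom_eq LG (ltac:(lia) : j + (i + 1) = i + j + 1) hb hag.
by rewrite (rhoB ij01 ha_bg (homZ grG s hb_ag)) (rhoZ _ ij01 hb_ag) subrr.
Qed.

Lemma pi_surj m y : 0 < m -> homG m y -> exists2 u, homU m u & pi u = y.
Proof.
move=> m0 hy.
have [u su uy] : exists2 u, spU u & pi u = y.
  have gen_y := genG (span_homog (Q := pos) m0 hy).
  apply: (gen_y (fun y => exists2 u, spU u & pi u = y)).
  - split; first by exists 0; [exact: (span0 grU pos) | exact: (pmor0 LU pi_mor)].
    move=> a _ _ [u1 s1 <-] [u2 s2 <-].
    by exists (a *: u1 + u2); [exact: (span_comb grU a s1 s2) | rewrite (pmor_comb pi_mor)].
  - move=> g hg; exists (iota g); last exact: pi_iota.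
    exact: span_homog ltr01 (iota_hom hg).
  - move=> _ _ [u1 s1 <-] [u2 s2 <-].
    by exists (brU u1 u2); [exact: (span_pos_br LU s1 s2) | rewrite (pmor_br pi_mor)].
exists (gcomp grU m u); first exact: gcomp_hom.
by rewrite (pmor_gcomp LU LG pi_mor su m0) uy (gcomp_id grG hy).
Qed.

(* Killing [G_1], [x] kills [G_+ = pi U_+] since [U_+] is generated by [U_1]. *)
Lemma brG1_eq0 d x : d <= 0 -> homG d x -> (forall g, homG 1 g -> brG x g = 0) -> x = 0.
Proof.
move=> d0 hx xg0.
have x_pi m u : 0 < m -> homU m u -> brG x (pi u) = 0.
  apply: (free_pos_ind LU freeU (Q := fun _ u => brG x (pi u) = 0)).
  - by move=> k _; rewrite (pmor0 LU pi_mor) (br0r LG).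
  - by move=> v /iota_surj[g [hg <-]]; rewrite pi_iota // xg0.
  - move=> k c y z k0 hy hz xy xz.
    rewrite (pmor_comb pi_mor _ (span_homog k0 hy) (span_homog k0 hz)) (br_combr LG).
    by rewrite xy xz scaler0 addr0.
  - move=> a b y z a0 b0 hy hz xy xz.
    rewrite (pmor_br pi_mor (span_homog a0 hy) (span_homog b0 hz)).
    by rewrite (br_jacobi LG _ hx (pmor_hom pi_mor a0 hy)) xy xz (br0l LG) (br0r LG) scaler0 addr0.
apply: transG; first exact: (span_homog (Q := fun k => k <= 0) d0 hx).
move=> y /(span_ofP grG) sy; rewrite (gcomp_decomp grG y) (br_suml LG) big1 // => k _.
case: (boolP (pos k)) => pk; last by rewrite sy // (br0l LG).
have [u hu <-] := pi_surj pk (gcomp_hom grG k y).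
by rewrite (br_anti LG (pmor_hom pi_mor pk hu) hx) (x_pi k u pk hu) scaler0 oppr0.
Qed.

Lemma rho_inj d x : d <= 1 -> homG d x -> rho x = 0 -> x = 0.
Proof.
move=> d1; move: d d1 x; apply: le1_ind => [|d d0 IH] x hx rx0.
  apply: (iota_inj hx (hom0 grG 1)).
  by rewrite -(rho_iota hx) rx0 -(rho_iota (hom0 grG 1)) rho0.
apply: (brG1_eq0 d0 hx) => g hg; apply: (IH _ (br_hom LG hx hg)).
by rewrite -(rho_br d0 hx hg) rx0 (br0l LU).
Qed.

Definition intertwines (m : int) (y : VU) := forall d x, d <= 0 -> homG d x ->
  (0 < d + m -> pi (brU (rho x) y) = brG x (pi y)) /\
  (d + m <= 0 -> brU (rho x) y = rho (brG x (pi y))).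

Section IntertwineBracket.
Variables (a b : int) (y z : VU) (d : int) (x : VG).
Hypotheses (a0 : 0 < a) (b0 : 0 < b) (hy : homU a y) (hz : homU b z)
  (Iy : intertwines a y) (Iz : intertwines b z) (d0 : d <= 0) (hx : homG d x).

Let hpy : homG a (pi y) := pmor_hom pi_mor a0 hy.
Let hpz : homG b (pi z) := pmor_hom pi_mor b0 hz.
Let hxy : homG (d + a) (brG x (pi y)) := br_hom LG hx hpy.
Let hxz : homG (d + b) (brG x (pi z)) := br_hom LG hx hpz.
Let hrx : homU d (rho x) := rho_hom_nonpos d0 hx.

Lemma pi_br_rho_l : 0 < d + (a + b) ->
  pi (brU (brU (rho x) y) z) = brG (brG x (pi y)) (pi z).
Proof.
move=> dab; case: (ltrP 0 (d + a)) => da.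
  rewrite (pmor_br pi_mor (span_homog da (br_hom LU hrx hy)) (span_homog b0 hz)).
  by rewrite ((Iy d0 hx).1 da).
by rewrite ((Iy d0 hx).2 da) ((Iz da hxy).1) //; lia.
Qed.

Lemma pi_br_rho_r : 0 < d + (a + b) ->
  pi (brU y (brU (rho x) z)) = brG (pi y) (brG x (pi z)).
Proof.
move=> dab; case: (ltrP 0 (d + b)) => db.
  rewrite (pmor_br pi_mor (span_homog a0 hy) (span_homog db (br_hom LU hrx hz))).
  by rewrite ((Iz d0 hx).1 db).
have hrxz := rho_hom_nonpos db hxz.
rewrite ((Iz d0 hx).2 db) (br_anti LU hy hrxz) (br_anti LG hpy hxz) -!scaleNr.
have dba : 0 < d + b + a by lia.
rewrite (pmorZ LU pi_mor) ?((Iy db hxz).1 dba) //.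
exact: span_homog dba (br_hom LU hrxz hy).
Qed.

Lemma intertwines_br_pos : 0 < d + (a + b) ->
  pi (brU (rho x) (brU y z)) = brG x (pi (brU y z)).
Proof.
move=> dab; have hl := br_hom LU (br_hom LU hrx hy) hz.
have hr := br_hom_eq LU (ltac:(lia) : a + (d + b) = d + a + b) hy (br_hom LU hrx hz).
have dab' : 0 < d + a + b by lia.
rewrite (pmor_br pi_mor (span_homog a0 hy) (span_homog b0 hz)).
rewrite (br_jacobi LU z hrx hy) (br_jacobi LG (pi z) hx hpy).
rewrite (pmorD pi_mor (span_homog dab' hl)); last first.
  exact: span_homog dab' (homZ grU _ hr).
by rewrite (pmorZ LU pi_mor _ (span_homog dab' hr)) pi_br_rho_l ?pi_br_rho_r.
Qed.

Lemma intertwines_br_nonpos : d + (a + b) <= 0 ->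
  brU (rho x) (brU y z) = rho (brG x (pi (brU y z))).
Proof.
move=> dab; have da : d + a <= 0 by lia. have db : d + b <= 0 by lia.
have hrxz := rho_hom_nonpos db hxz.
rewrite (pmor_br pi_mor (span_homog a0 hy) (span_homog b0 hz)).
rewrite (br_jacobi LU z hrx hy) (br_jacobi LG (pi z) hx hpy).
rewrite ((Iy d0 hx).2 da) ((Iz d0 hx).2 db) ((Iz da hxy).2 ltac:(lia)).
rewrite (br_anti LU hy hrxz) ((Iy db hxz).2 ltac:(lia)) (br_anti LG hpy hxz).
have h1 := br_hom_eq LG (ltac:(lia) : d + a + b = d + (a + b)) hxy hpz.
have h2 := br_hom_eq LG (ltac:(lia) : d + b + a = d + (a + b)) hxz hpy.
by rewrite -!scaleNr !scalerA (rhoD _ h1 (homZ grG _ h2)) ?(rhoZ _ _ h2) //; lia.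
Qed.

End IntertwineBracket.

Lemma intertwines_hom m u : 0 < m -> homU m u -> intertwines m u.
Proof.
apply: (free_pos_ind LU freeU (Q := intertwines)).
- move=> k _ d x d0 hx.
  by rewrite (br0r LU) (pmor0 LU pi_mor) (br0r LG) rho0.
- move=> v /iota_surj[g [hg <-]] d x d0 hx; rewrite pi_iota // (rho_br d0 hx hg).
  split=> // d1; have hxg := br_hom_eq LG (ltac:(lia) : d + 1 = 1) hx hg.
  by rewrite (rho_iota hxg) pi_iota.
- move=> k c y z k0 hy hz Iy Iz d x d0 hx.
  have [I1y I2y] := Iy d x d0 hx; have [I1z I2z] := Iz d x d0 hx.
  have hrx := rho_hom_nonpos d0 hx.
  rewrite (pmor_comb pi_mor _ (span_homog k0 hy) (span_homog k0 hz)) (br_combr LU) (br_combr LG).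
  split=> dk.
    rewrite (pmor_comb pi_mor _ (span_homog dk (br_hom LU hrx hy))) ?I1y ?I1z //.
    exact: span_homog dk (br_hom LU hrx hz).
  have hpy := br_hom LG hx (pmor_hom pi_mor k0 hy).
  have hpz := br_hom LG hx (pmor_hom pi_mor k0 hz).
  by rewrite I2y // I2z // (rho_lin (ler_wpDr ler01 dk : d + k <= 1) c hpy hpz).
- move=> a b y z a0 b0 hy hz Iy Iz d x d0 hx; split.
    exact: intertwines_br_pos.
  exact: intertwines_br_nonpos.
Qed.

Lemma rho_idealises d x v : d <= 0 -> homG d x -> D v -> D (brU (rho x) v).
Proof.
move=> d0 hx [sv pv0]; have zv := (span_ofP grU _ _).1 sv.
rewrite (gcomp_decomp grU v) (br_sumr LU); apply: (D_sum LU pi_mor) => j _.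
case: (boolP (pos j)) => pj; last by rewrite zv // (br0r LU); exact: (D0 LU pi_mor).
have hj := gcomp_hom grU j v.
have pj0 : pi (gcomp grU j v) = 0 by rewrite (pmor_gcomp LU LG pi_mor) // pv0 raddf0.
have [I1 I2] := intertwines_hom pj hj d0 hx.
case: (ltrP 0 (d + j)) => dj; last by rewrite I2 // pj0 (br0r LG) rho0; exact: (D0 LU pi_mor).
have hrx := rho_hom_nonpos d0 hx.
by apply: (D_homog dj (br_hom LU hrx hj)); rewrite I1 // pj0 (br0r LG).
Qed.

Lemma rho_Nprime j x : homG (- (p + j)%N%:Z) x -> Nprime_neg homU brU pi p T j (rho x).
Proof.
elim: j x => [|j IH] x hx /=; first by rewrite addn0 in hx; exact: T_rho.
have d0 : - (p + j.+1)%N%:Z <= 0 by lia.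
split; first exact: rho_hom_nonpos d0 hx.
split; first by move=> v; exact: rho_idealises d0 hx.
move=> u /iota_surj[g [hg <-]]; rewrite (rho_br d0 hx hg); apply: IH.
exact (br_hom_eq LG (ltac:(lia) : - (p + j.+1)%N%:Z + 1 = - (p + j)%N%:Z) hx hg).
Qed.

Lemma congD_pi k u v : 0 < k -> homU k u -> homU k v -> pi u = pi v -> congD u v.
Proof.
move=> k0 hu hv puv; apply: (D_homog k0 (homB grU hu hv)).
by rewrite (pmorB pi_mor (span_homog k0 hu) (span_homog k0 hv)) puv subrr.
Qed.

(* In positive degrees only some preimage under [pi] is available, which is
   why the lift below is a morphism only modulo [D]. *)
Definition lift_pos (k : int) (y : VG) : VU :=
  epsilon (inhabits 0) (fun u => homU k u /\ pi u = y).

Lemma lift_posP k y : 0 < k -> homG k y -> homU k (lift_pos k y) /\ pi (lift_pos k y) = y.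
Proof.
move=> k0 hy; apply: (epsilon_spec (inhabits 0) (fun u => homU k u /\ pi u = y)).
by have [u hu pu] := pi_surj k0 hy; exists u.
Qed.

Definition lift (k : int) (y : VG) : VU := if k <= 0 then rho y else lift_pos k y.

Lemma lift_nonpos k y : k <= 0 -> lift k y = rho y.
Proof. by rewrite /lift => ->. Qed.

Lemma lift_pos_hom k y : 0 < k -> homG k y -> homU k (lift k y) /\ pi (lift k y) = y.
Proof. by move=> k0; rewrite /lift ifN -?ltNge //; apply: lift_posP. Qed.

Lemma lift_hom k y : homG k y -> homU k (lift k y).
Proof.
case: (lerP k 0) => k0 hy; last by case: (lift_pos_hom k0 hy).
by rewrite lift_nonpos //; exact: rho_hom_nonpos k0 hy.
Qed.

Lemma lift0 k : D (lift k 0).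
Proof.
case: (lerP k 0) => k0; first by rewrite lift_nonpos // rho0; exact: (D0 LU pi_mor).
by have [h p0] := lift_pos_hom k0 (hom0 grG k); apply: (D_homog k0 h p0).
Qed.

Lemma lift_lin k (a : K) x y : homG k x -> homG k y ->
  congD (lift k (a *: x + y)) (a *: lift k x + lift k y).
Proof.
move=> hx hy; have hxy := hom_comb grG a hx hy.
case: (lerP k 0) => k0.
  rewrite !lift_nonpos // (rho_lin (ler_wpDr ler01 k0) a hx hy).
  exact: congD_refl LU pi_mor _.
have [h1 p1] := lift_pos_hom k0 hxy.
have [h2 p2] := lift_pos_hom k0 hx; have [h3 p3] := lift_pos_hom k0 hy.
apply: (congD_pi k0 h1 (hom_comb grU a h2 h3)).
by rewrite (pmor_comb pi_mor _ (span_homog k0 h2) (span_homog k0 h3)) p1 p2 p3.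
Qed.

Lemma liftZ k (c : K) y : homG k y -> congD (lift k (c *: y)) (c *: lift k y).
Proof.
move=> hy; have := lift_lin c hy (hom0 grG k); rewrite addr0 => lin.
apply: (congD_trans LU pi_mor lin); rewrite /congD addrAC subrr add0r; exact: lift0.
Qed.

Lemma lift_br_rho i j a b : i <= 0 -> 0 < j -> homG i a -> homG j b ->
  congD (lift (i + j) (brG a b)) (brU (lift i a) (lift j b)).
Proof.
move=> i0 j0 ha hb; have [hu pu] := lift_pos_hom j0 hb.
have [I1 I2] := intertwines_hom j0 hu i0 ha.
rewrite (lift_nonpos _ i0); case: (lerP (i + j) 0) => ij.
  by rewrite lift_nonpos // I2 // pu; exact: congD_refl LU pi_mor _.
have [hl pl] := lift_pos_hom ij (br_hom LG ha hb).
have hr := br_hom LU (rho_hom_nonpos i0 ha) hu.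
by apply: (congD_pi ij hl hr); rewrite I1 // pu pl.
Qed.

Lemma lift_br i j a b : homG i a -> homG j b ->
  congD (lift (i + j) (brG a b)) (brU (lift i a) (lift j b)).
Proof.
move=> ha hb; case: (lerP i 0) => i0; case: (lerP j 0) => j0.
- rewrite !lift_nonpos ?(rho_br_rho i0 (ler_wpDr ler01 j0) ha hb) //; last by lia.
  exact: congD_refl LU pi_mor _.
- exact: lift_br_rho.
- rewrite (br_anti LG ha hb) (br_anti LU (lift_hom ha) (lift_hom hb)) addrC -!scaleNr.
  apply: (congD_trans LU pi_mor (liftZ _ (br_hom LG hb ha))).
  have := congD_comb LU pi_mor (- (-1) ^ (i * j)) (lift_br_rho j0 i0 hb ha) (congD_refl LU pi_mor 0).
  by rewrite !addr0.
- have [h1 p1] := lift_pos_hom (addr_gt0 i0 j0) (br_hom LG ha hb).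
  have [h2 p2] := lift_pos_hom i0 ha; have [h3 p3] := lift_pos_hom j0 hb.
  apply: (congD_pi (addr_gt0 i0 j0) h1 (br_hom LU h2 h3)).
  by rewrite (pmor_br pi_mor (span_homog i0 h2) (span_homog j0 h3)) p1 p2 p3.
Qed.

Definition embed (x : VG) : VU := \sum_(k <- gsupp grG x) lift k (gcomp grG k x).

Lemma embed_any x r : uniq r -> (forall k, k \notin r -> gcomp grG k x = 0) ->
  congD (embed x) (\sum_(k <- r) lift k (gcomp grG k x)).
Proof.
move=> ur zr; set t := undup (gsupp grG x ++ r).
have st : {subset gsupp grG x <= t} by move=> k kx; rewrite mem_undup mem_cat kx.
have rt : {subset r <= t} by move=> k kr; rewrite mem_undup mem_cat kr orbT.
have lift0_out (s : seq int) : (forall k, k \notin s -> gcomp grG k x = 0) ->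
    forall k, k \notin s -> D (lift k (gcomp grG k x)).
  by move=> zs k ks; rewrite zs //; exact: lift0.
have e1 := congD_widen LU pi_mor (uniq_gsupp grG x) (undup_uniq _) st
  (lift0_out _ (@gcomp_notin _ _ _ grG x)).
have e2 := congD_widen LU pi_mor ur (undup_uniq _) rt (lift0_out _ zr).
exact (congD_trans LU pi_mor (congD_sym LU pi_mor e1) e2).
Qed.

Lemma embed_homog k y : homG k y -> congD (embed y) (lift k y).
Proof.
move=> hy; have := @embed_any y [:: k] erefl.
rewrite big_seq1 (gcomp_id grG hy); apply=> j; rewrite inE => jk.
by rewrite (gcomp_homog grG j hy) (negbTE jk).
Qed.

Lemma embed_lin (a : K) x y : congD (embed (a *: x + y)) (a *: embed x + embed y).
Proof.
set r := undup (gsupp grG x ++ gsupp grG y).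
have ur : uniq r by apply: undup_uniq.
have zx k : k \notin r -> gcomp grG k x = 0.
  by rewrite mem_undup mem_cat negb_or => /andP[/gcomp_notin].
have zy k : k \notin r -> gcomp grG k y = 0.
  by rewrite mem_undup mem_cat negb_or => /andP[_ /gcomp_notin].
apply: (congD_trans LU pi_mor (embed_any ur _)).
  by move=> k kr; rewrite linearP /= zx // zy // scaler0 addr0.
apply: (congD_trans LU pi_mor (_ : congD _ (\sum_(k <- r)
  (a *: lift k (gcomp grG k x) + lift k (gcomp grG k y))))).
  by apply: (congD_sum LU pi_mor) => k; rewrite linearP; apply: lift_lin; apply: gcomp_hom.
rewrite big_split /= -scaler_sumr.
by apply: (congD_comb LU pi_mor); apply: (congD_sym LU pi_mor); apply: embed_any.
Qed.

Lemma embed0 : D (embed 0).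
Proof.
have := @embed_any 0 [::] erefl (fun k _ => raddf0 (gcomp grG k)).
by rewrite big_nil /congD subr0.
Qed.

Lemma embed_sum (J : eqType) (s : seq J) (F : J -> VG) :
  congD (embed (\sum_(i <- s) F i)) (\sum_(i <- s) embed (F i)).
Proof.
elim: s => [|i s IH]; first by rewrite !big_nil /congD subr0; exact: embed0.
rewrite !big_cons; have := embed_lin 1 (F i) (\sum_(j <- s) F j); rewrite !scale1r => lin.
apply: (congD_trans LU pi_mor lin).
by have := congD_comb LU pi_mor 1 (congD_refl LU pi_mor (embed (F i))) IH; rewrite !scale1r.
Qed.

Lemma embed_br x y : congD (embed (brG x y)) (brU (embed x) (embed y)).
Proof.
rewrite (br_gcomp LG) /embed (br_suml LU).
apply: (congD_trans LU pi_mor (embed_sum _ _)).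
apply: (congD_sum LU pi_mor) => i; rewrite (br_sumr LU).
apply: (congD_trans LU pi_mor (embed_sum _ _)).
apply: (congD_sum LU pi_mor) => j.
have hi := gcomp_hom grG i x; have hj := gcomp_hom grG j y.
exact (congD_trans LU pi_mor (embed_homog (br_hom LG hi hj)) (lift_br hi hj)).
Qed.

Lemma embed_hom k x : homG k x -> exists d, D d /\ homU k (embed x - d).
Proof.
move=> hx; exists (embed x - lift k x); split; first exact: embed_homog.
by rewrite opprB addrC subrK; apply: lift_hom.
Qed.

Lemma embed_Nprime x : inNprime homU brU pi p T (embed x).
Proof.
exists (map (fun k => lift k (gcomp grG k x)) (gsupp grG x)); split; last by rewrite big_map.
move=> w /mapP[k _ ->]; have hk := gcomp_hom grG k x.
case: (lerP k 0) => k0; last by right; right; exists k; split; [|case: (lift_pos_hom k0 hk)].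
rewrite lift_nonpos //; move: hk; rewrite (nonpos_natE k0) => hk.
case: (leqP `|k| p) => kp; first by right; left; exists `|k|%N; split; [|exact: T_rho].
left; exists (`|k| - p)%N; apply: rho_Nprime.
by rewrite (_ : (p + (`|k| - p))%N = `|k|%N) //; lia.
Qed.

Lemma embed_inj x : D (embed x) -> x = 0.
Proof.
move=> [se pe0]; have ze := (span_ofP grU _ _).1 se.
have x_nonpos k : k <= 0 -> gcomp grG k x = 0.
  move=> k0; have := ze k ltac:(rewrite /pos; lia).
  rewrite raddf_sum /= (eq_bigr (fun j => if k == j then lift j (gcomp grG j x) else 0)); last first.
    by move=> j _; rewrite (gcomp_homog grU k (lift_hom (gcomp_hom grG j x))).
  rewrite big_uniq_pick ?uniq_gsupp //; case: ifP => [_ | /negbT /gcomp_notin //].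
  by rewrite lift_nonpos //; apply: (rho_inj (ler_wpDr ler01 k0) (gcomp_hom grG k x)).
have pi_lift k : pi (lift k (gcomp grG k x)) = gcomp grG k x.
  case: (lerP k 0) => k0; first by rewrite x_nonpos // lift_nonpos // rho0 (pmor0 LU pi_mor).
  by case: (lift_pos_hom k0 (gcomp_hom grG k x)).
have sp_lift k : spU (lift k (gcomp grG k x)).
  case: (lerP k 0) => k0; first by rewrite x_nonpos // lift_nonpos // rho0; exact: (span0 grU pos).
  by case: (lift_pos_hom k0 (gcomp_hom grG k x)) => h _; exact: span_homog k0 h.
by rewrite (gcomp_decomp grG x) -(eq_bigr _ (fun k _ => pi_lift k)) -(pmor_sum LU pi_mor).
Qed.

Lemma reduced_prolongation_embedding :
  embeds_in_reduced_prolongation homG brG homU brU pi p T.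
Proof.
exists embed; split; first exact: embed_Nprime.
split; first exact: embed_lin.
split; first exact: embed_br.
split; first exact: embed_hom.
exact: embed_inj.
Qed.

End Embedding.

Unset Implicit Arguments.

Theorem proposition3p14 (K : numFieldType)
  (VG : lmodType K) (homG : int -> VG -> Prop) (brG : VG -> VG -> VG)
  (VU : lmodType K) (homU : int -> VU -> Prop) (brU : VU -> VU -> VU)
  (iota : VG -> VU) (pi : VU -> VG) (rho : VG -> VU)
  (p : nat) (T : nat -> VU -> Prop) :
  is_lie_super homG brG ->
  pos_zero_trans homG brG ->
  (forall v, span_of pos homG v <-> gen_sub brG (homG 1) v) ->
  is_lie_super homU brU ->
  lin_on (homG 1) iota ->
  (forall g, homG 1 g -> homU 1 (iota g)) ->
  (forall g g', homG 1 g -> homG 1 g' -> iota g = iota g' -> g = g') ->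
  (forall u, homU 1 u -> exists g, homG 1 g /\ iota g = u) ->
  universal_neg homU brU ->
  free_pos homU brU ->
  lie_mor_pos homU brU homG brG pi ->
  (forall g, homG 1 g -> pi (iota g) = g) ->
  (forall g, homG 1 g -> rho g = iota g) ->
  (forall (k : nat) x, homG (- k%:Z) x ->
     homU (- k%:Z) (rho x) /\
     forall g, homG 1 g -> brU (rho x) (iota g) = rho (brG x g)) ->
  (forall k, (k <= p)%N -> subspace (T k) /\ (forall x, T k x -> homU (- k%:Z) x)) ->
  (forall k x, (k <= p)%N -> homG (- k%:Z) x -> T k (rho x)) ->
  (forall k x u, (k <= p)%N -> T k x -> homU 1 u ->
     if k is k'.+1 then T k' (brU x u) else homU 1 (brU x u)) ->
  (forall k x d, (k <= p)%N -> T k x -> inD homU pi d -> inD homU pi (brU x d)) ->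
  embeds_in_reduced_prolongation homG brG homU brU pi p T.
Proof.
move=> LG transG genG LU iota_lin iota_hom iota_inj iota_surj univU freeU
  pi_mor pi_iota rho_iota rho_nat _ T_rho _ _.
exact: (reduced_prolongation_embedding LG transG (fun v => (genG v).1) LU univU freeU
  iota_lin iota_hom iota_inj iota_surj pi_mor pi_iota rho_iota rho_nat T_rho).
Qed.
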